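(* There exists a universal constant $C>0$ such that the following holds. Let $\mathcal{X}$ be a set, let $\{\rho(\boldsymbol\theta)\}_{\boldsymbol\theta\in\Theta}$ be any family of $n$-qubit density matrices, and let $\mathbf{x}\mapsto O(\mathbf{x})$ assign to each $\mathbf{x}\in\mathcal{X}$ a Hermitian operator on $n$ qubits, with $\|O\|_\infty:=\sup_{\mathbf{x}\in\mathcal{X}}\|O(\mathbf{x})\|_\infty<\infty$. Let $\mathcal{C}_{n,O}=\{f_{\boldsymbol\theta}:\boldsymbol\theta\in\Theta\}$ with $f_{\boldsymbol\theta}(\mathbf{x})=\operatorname{Tr}[\rho(\boldsymbol\theta)O(\mathbf{x})]$. Then for every $\gamma>0$, $\mathrm{fat}_{\mathcal{C}_{n,O}}(\gamma)\le C\, n\|O\|_\infty^2/\gamma^2$.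
   Context: $\|A\|_\infty$ is the spectral norm. For a class $\mathcal{C}$ of functions $\mathcal{X}\to\mathbb{R}$ and $\gamma>0$, the fat-shattering dimension $\mathrm{fat}_{\mathcal{C}}(\gamma)$ is the largest $k$ such that there exist points $\mathbf{x}^{(1)},\ldots,\mathbf{x}^{(k)}\in\mathcal{X}$ and reals $\alpha_1,\ldots,\alpha_k$ such that for every $\mathbf{y}\in\{0,1\}^k$ there is $f\in\mathcal{C}$ with $f(\mathbf{x}^{(i)})\le\alpha_i-\gamma$ whenever $y_i=0$ and $f(\mathbf{x}^{(i)})\ge\alpha_i+\gamma$ whenever $y_i=1$, for all $i$. *)

From HB Require Import structures.
From mathcomp Require Import all_boot all_order all_algebra.
From mathcomp Require Import boolp classical_sets reals.
From mathcomp Require Import complex.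
Set Implicit Arguments. Unset Strict Implicit. Unset Printing Implicit Defensive.
Import Order.TTheory GRing.Theory Num.Theory.
Local Open Scope ring_scope.
Local Open Scope classical_set_scope.

Section QDefs.
Variable R : realType.
Local Notation C := (R[i]).

Definition adjmx (m n : nat) (A : 'M[C]_(m, n)) : 'M[C]_(n, m) :=
  (map_mx (@conjc R) A)^T.

Definition is_hermitian (d : nat) (A : 'M[C]_d) : Prop := adjmx A = A.

(* positive semidefinite: v^* A v >= 0 (i.e. real and nonnegative) for all v *)
Definition psd (d : nat) (A : 'M[C]_d) : Prop :=
  forall v : 'cV[C]_d, 0 <= (adjmx v *m A *m v) 0 0.

Definition density_matrix (d : nat) (A : 'M[C]_d) : Prop :=
  is_hermitian A /\ psd A /\ \tr A = 1.

Definition vnorm (d : nat) (v : 'cV[C]_d) : R :=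
  Num.sqrt (\sum_i (complex.Re (v i 0) ^+ 2 + complex.Im (v i 0) ^+ 2)).

Definition spectral_norm (d : nat) (A : 'M[C]_d) : R :=
  sup [set vnorm (A *m v) | v in [set v : 'cV[C]_d | vnorm v = 1]].

Definition spectral_norms (X : Type) (d : nat) (O : X -> 'M[C]_d) : set R :=
  [set spectral_norm (O x) | x in [set: X]].

Definition sup_spectral_norm (X : Type) (d : nat) (O : X -> 'M[C]_d) : R :=
  sup (spectral_norms O).

Definition fat_shatters (X : Type) (Cl : set (X -> R)) (gamma : R) (k : nat)
  : Prop :=
  exists (pts : 'I_k -> X) (alpha : 'I_k -> R),
    forall y : 'I_k -> bool, exists2 f, Cl f &
      forall i : 'I_k,
        if y i then alpha i + gamma <= f (pts i) else f (pts i) <= alpha i - gamma.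

Definition trace_class (X Theta : Type) (n : nat)
  (rho : Theta -> 'M[C]_(2 ^ n)) (O : X -> 'M[C]_(2 ^ n)) : set (X -> R) :=
  [set (fun x => complex.Re (\tr (rho th *m O x))) | th in [set: Theta]].

End QDefs.

From mathcomp Require Import all_boot all_order all_algebra.
From mathcomp Require Import boolp classical_sets reals.
From mathcomp Require Import complex spectral sesquilinear.
From mathcomp Require Import lra ring zify.
Set Implicit Arguments. Unset Strict Implicit. Unset Printing Implicit Defensive.
Import Order.TTheory GRing.Theory Num.Theory.
Local Open Scope ring_scope.

(* Let [x_1, ..., x_k] be gamma-fat-shattered, [M_j = O(x_j)], and for a sign
   pattern [e] put [T_e = \sum_j e_j M_j].  The states realizing [e] and its
   complement force [|Tr (rho T_e)| >= k gamma] for some density matrix [rho],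
   hence [(k gamma) ^ (2 q) <= Tr (T_e ^ (2 q))] by Jensen's inequality over the
   eigenvalues of [T_e].  Summing over [e] and expanding the powers, every
   mixed sign average is nonnegative, so
   [\sum_e Tr (T_e ^ (2 q)) <= 2 ^ n ||O|| ^ (2 q) \sum_e (\sum_j e_j) ^ (2 q)],
   and Khintchine's moment bound gives [\sum_e (\sum_j e_j) ^ (2 q) <=
   2 ^ k (4 q k) ^ q].  Taking [q]-th roots with [q] a power of two in
   [(n, 2 n]] yields [k gamma ^ 2 <= 16 n ||O|| ^ 2]. *)

Definition sgb (F : pzRingType) (b : bool) : F := if b then 1 else -1.
Arguments sgb {F} b.

Lemma sgbN {F : pzRingType} b : sgb (~~ b) = - sgb b :> F.
Proof. by case: b; rewrite /= ?opprK. Qed.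

Lemma sqr_sgb {F : pzRingType} b : sgb b ^+ 2 = 1 :> F.
Proof. by case: b; rewrite /= ?sqrrN expr1n. Qed.

Lemma rmorph_sgb (F G : pzRingType) (f : {rmorphism F -> G}) b : f (sgb b) = sgb b.
Proof. by case: b; rewrite /= ?rmorph1 ?rmorphN1. Qed.

Lemma exprn_sum_bigA (S : pzSemiRingType) k m (x : 'I_k -> S) :
  (\sum_j x j) ^+ m = \sum_(f : {ffun 'I_m -> 'I_k}) \prod_i x (f i).
Proof.
rewrite -[in LHS](card_ord m) -prodr_const; exact: bigA_distr_bigA.
Qed.

Definition rademacher_sum (F : pzRingType) k (e : {ffun 'I_k -> bool}) : F :=
  \sum_j sgb (e j).

Definition rademacher_moment (F : pzRingType) k m : F :=
  \sum_(e : {ffun 'I_k -> bool}) rademacher_sum F e ^+ m.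

Lemma rmorph_rademacher_moment (F G : pzRingType) (f : {rmorphism F -> G}) k m :
  f (rademacher_moment F k m) = rademacher_moment G k m.
Proof.
rewrite rmorph_sum; apply: eq_bigr => e _; rewrite rmorphXn rmorph_sum.
by congr (_ ^+ _); apply: eq_bigr => j _; rewrite rmorph_sgb.
Qed.

(* The coefficient of [M (f 0) * ... * M (f (m-1))] in the expansion of
   [\sum_e (\sum_j sgb (e j) *: M j) ^+ m]. *)
Definition sign_coef (F : pzRingType) k m (f : {ffun 'I_m -> 'I_k}) : F :=
  \sum_(e : {ffun 'I_k -> bool}) \prod_i sgb (e (f i)).

Lemma sum_sign_coef (F : pzRingType) k m :
  \sum_(f : {ffun 'I_m -> 'I_k}) sign_coef F f = rademacher_moment F k m.
Proof.
rewrite exchange_big; apply: eq_bigr => e _.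
by rewrite /rademacher_sum exprn_sum_bigA.
Qed.

(* Summing over [e] factorises the coefficient into one factor per index [j],
   which is [2] or [0] according to the parity of the multiplicity of [j]. *)
Lemma sign_coef_ge0 (F : numDomainType) k m (f : {ffun 'I_m -> 'I_k}) :
  0 <= sign_coef F f.
Proof.
have factor (e : {ffun 'I_k -> bool}) : \prod_i sgb (e (f i)) =
    \prod_j sgb (e j) ^+ #|[pred i | f i == j]| :> F.
  rewrite (partition_big (fun i => f i) predT) //=; apply: eq_bigr => j _.
  by rewrite -prodr_const; apply: eq_big => // i /eqP ->.
rewrite /sign_coef (eq_bigr _ (fun e _ => factor e)).
rewrite -(bigA_distr_bigA (fun j b => sgb b ^+ #|[pred i | f i == j]| : F)).
apply: prodr_ge0 => j _; rewrite big_bool /= expr1n -signr_odd.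
by case: odd; rewrite ?expr0 ?expr1 ?subrr // -(natrD F 1 1) ler0n.
Qed.

Section SignCombinations.
Variables (F : comNzRingType) (A : algType F) (k : nat) (M : 'I_k -> A).

Definition sign_comb (e : {ffun 'I_k -> bool}) : A := \sum_j sgb (e j) *: M j.

Lemma sum_sign_comb_expr m :
  \sum_e sign_comb e ^+ m = \sum_(f : {ffun 'I_m -> 'I_k}) sign_coef F f *: \prod_i M (f i).
Proof.
under eq_bigr do rewrite exprn_sum_bigA; rewrite exchange_big.
by apply: eq_bigr => f _; rewrite scaler_suml; apply: eq_bigr => e _; rewrite scaler_prod.
Qed.

End SignCombinations.

Section RademacherMoments.
Variable R : realFieldType.

Lemma mixed_expr_le (x y : R) p i : (i <= 2 * p)%N ->
  x ^+ (2 * p - i) * y ^+ i <= x ^+ (2 * p) + y ^+ (2 * p).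
Proof.
have even_norm (z : R) : `|z| ^+ (2 * p) = z ^+ (2 * p).
  by rewrite !exprM real_normK ?num_real.
move=> le_i_2p; apply: (le_trans (ler_norm _)); rewrite normrM !normrX.
wlog le_xy : x y i le_i_2p / `|x| <= `|y|.
  move=> H; case: (lerP `|x| `|y|) => [|/ltW]; first exact: H.
  rewrite mulrC addrC => /(H y x (2 * p - i)%N (leq_subr _ _)).
  by rewrite subKn.
apply: (@le_trans _ _ (`|y| ^+ (2 * p - i) * `|y| ^+ i)).
  apply: ler_wpM2r; first exact: exprn_ge0.
  by rewrite lerXn2r // nnegrE.
by rewrite -exprD subnK // even_norm lerDr exprM exprn_ge0 ?sqr_ge0.
Qed.

Lemma sqr1_mul_subrXX_le (a s : R) p : s ^+ 2 = 1 ->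
  s * (a ^+ (2 * p).+1 - (a - 2 * s) ^+ (2 * p).+1)
    <= 2 * (2 * p).+1%:R * (a ^+ (2 * p) + (a - 2 * s) ^+ (2 * p)).
Proof.
move=> s2; rewrite subrXX /= mulrA.
have -> : s * (a - (a - 2 * s)) = 2 by rewrite opprB addrC subrK mulrCA -expr2 s2 mulr1.
rewrite -mulrA ler_wpM2l //.
apply: (@le_trans _ _ (\sum_(i < (2 * p).+1) (a ^+ (2 * p) + (a - 2 * s) ^+ (2 * p)))).
  by apply: ler_sum => i _; apply: mixed_expr_le; rewrite -ltnS.
by rewrite sumr_const card_ord [X in _ <= X]mulr_natl.
Qed.

Variable k : nat.

Definition flip_at (j : 'I_k) (e : {ffun 'I_k -> bool}) : {ffun 'I_k -> bool} :=
  [ffun i => if i == j then ~~ e i else e i].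

Lemma flip_atK j : involutive (flip_at j).
Proof.
by move=> e; apply/ffunP => i; rewrite !ffunE; case: eqP => // _; rewrite negbK.
Qed.

Lemma rademacher_sum_flip_at j e :
  rademacher_sum R (flip_at j e) = rademacher_sum R e - 2 * sgb (e j).
Proof.
rewrite /rademacher_sum (bigD1 j) //= [in RHS](bigD1 j) //= ffunE eqxx sgbN.
rewrite (eq_bigr (fun i => sgb (e i))) => [|i /negbTE i_neq_j]; last first.
  by rewrite ffunE i_neq_j.
lra.
Qed.

(* With [S := rademacher_sum R], write [S e ^+ (2 p).+2] as
   [\sum_j sgb (e j) * S e ^+ (2 p).+1]; pairing [e] with [flip_at j e] in the
   [j]-th summand reduces each pair to [sqr1_mul_subrXX_le]. *)
Lemma rademacher_moment_step p :
  rademacher_moment R k (2 * p).+2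
    <= 2 * (2 * p).+1%:R * k%:R * rademacher_moment R k (2 * p).
Proof.
rewrite /rademacher_moment.
have split_sum (e : {ffun 'I_k -> bool}) : rademacher_sum R e ^+ (2 * p).+2 =
    \sum_j sgb (e j) * rademacher_sum R e ^+ (2 * p).+1.
  by rewrite exprS {1}/rademacher_sum mulr_suml.
rewrite (eq_bigr _ (fun e _ => split_sum e)) exchange_big /=.
set D := \sum_(e : {ffun 'I_k -> bool}) rademacher_sum R e ^+ (2 * p).
apply: (@le_trans _ _ (\sum_(j < k) 2 * (2 * p).+1%:R * D)); last first.
  by rewrite sumr_const card_ord [X in _ <= X]mulrAC [X in _ <= X]mulr_natr.
apply: ler_sum => j _.
set G := fun e : {ffun 'I_k -> bool} => sgb (e j) * rademacher_sum R e ^+ (2 * p).+1.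
have flipG : \sum_e G e = \sum_e G (flip_at j e).
  exact: (reindex_inj (can_inj (flip_atK j))).
have flipD : D = \sum_e rademacher_sum R (flip_at j e) ^+ (2 * p).
  exact: (reindex_inj (can_inj (flip_atK j))).
suff : \sum_e G e + \sum_e G (flip_at j e) <= 2 * (2 * p).+1%:R * (D + D).
  by rewrite -flipG mulrDr; lra.
rewrite {2}flipD -!big_split /= mulr_sumr; apply: ler_sum => e _.
rewrite /G rademacher_sum_flip_at ffunE eqxx sgbN mulNr -mulrBr.
exact: sqr1_mul_subrXX_le (sqr_sgb (e j)).
Qed.

Lemma rademacher_moment_le p :
  rademacher_moment R k (2 * p) <= 2 ^+ k * (4 * p * k)%:R ^+ p.
Proof.
elim: p => [|p IH].
  rewrite muln0 expr0 mulr1 /rademacher_moment (eq_bigr (fun _ => 1)) => [|e _]; last first.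
    by rewrite expr0.
  by rewrite sumr_const card_ffun card_bool card_ord natrX.
have -> : (2 * p.+1 = (2 * p).+2)%N by rewrite mulnS.
apply: (le_trans (rademacher_moment_step p)).
apply: (le_trans (ler_wpM2l _ IH)); first by rewrite !mulr_ge0.
rewrite mulrCA exprS ler_wpM2l ?exprn_ge0 // ler_pM ?mulr_ge0 ?exprn_ge0 //.
  by rewrite -!natrM ler_nat; lia.
by rewrite lerXn2r ?nnegrE ?ler_nat //; lia.
Qed.

End RademacherMoments.

Lemma fat_bound_from_moments (R : realFieldType) (k q d : nat) (gamma B : R) :
  (0 < k)%N -> (0 < q)%N -> (d <= 2 ^ q)%N ->
  2 ^+ k * (k%:R * gamma) ^+ (2 * q)
    <= d%:R * B ^+ (2 * q) * (2 ^+ k * (4 * q * k)%:R ^+ q) ->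
  k%:R * gamma ^+ 2 <= 8 * q%:R * B ^+ 2.
Proof.
move=> k_gt0 q_gt0 le_d_2q.
set X := k%:R * gamma ^+ 2; set Y := 4 * q%:R * B ^+ 2.
have c_gt0 : 0 < 2 ^+ k * k%:R ^+ q :> R by rewrite mulr_gt0 ?exprn_gt0 ?ltr0n.
have -> : 2 ^+ k * (k%:R * gamma) ^+ (2 * q) = 2 ^+ k * k%:R ^+ q * X ^+ q.
  by rewrite exprM -mulrA -exprMn /X; congr (_ * _ ^+ _); ring.
have -> : d%:R * B ^+ (2 * q) * (2 ^+ k * (4 * q * k)%:R ^+ q)
    = 2 ^+ k * k%:R ^+ q * (d%:R * Y ^+ q).
  by rewrite exprM !natrM !exprMn; ring.
rewrite ler_pM2l // => X_le.
have Y_ge0 : 0 <= Y := mulr_ge0 (mulr_ge0 (ler0n _ 4) (ler0n _ q)) (sqr_ge0 B).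
have -> : 8 * q%:R * B ^+ 2 = 2 * Y by rewrite /Y; ring.
have X_ge0 : 0 <= X := mulr_ge0 (ler0n _ k) (sqr_ge0 gamma).
rewrite -(ler_pXn2r q_gt0) ?nnegrE //; last exact: mulr_ge0 (ler0n _ 2) Y_ge0.
apply: (le_trans X_le); rewrite [X in _ <= X]exprMn.
apply: ler_wpM2r; first exact: exprn_ge0.
by rewrite -natrX ler_nat.
Qed.

Section VectorNorm.
Variable R : realType.
Local Notation C := R[i].

Definition cnorm (z : C) : R := Num.sqrt (complex.Re z ^+ 2 + complex.Im z ^+ 2).

Lemma cnormE z : (cnorm z)%:C%C = `|z|.
Proof. by rewrite normc_def. Qed.

Lemma cnorm_ge0 z : 0 <= cnorm z.
Proof. exact: sqrtr_ge0. Qed.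

Lemma cnormM z w : cnorm (z * w) = cnorm z * cnorm w.
Proof. by apply: complexI; rewrite rmorphM /= !cnormE normrM. Qed.

Lemma cnorm_sum (I : finType) (F : I -> C) : cnorm (\sum_i F i) <= \sum_i cnorm (F i).
Proof.
rewrite -lecR cnormE rmorph_sum /=; apply: (le_trans (ler_norm_sum _ _ _)).
by apply: ler_sum => i _; rewrite cnormE.
Qed.

Lemma Re_le_cnorm z : complex.Re z <= cnorm z.
Proof. by apply: (le_trans (ler_norm _)); rewrite -lecR cnormE normc_ge_Re. Qed.

Lemma vnormE d (v : 'cV[C]_d) : vnorm v = Num.sqrt (\sum_i cnorm (v i 0) ^+ 2).
Proof.
by congr Num.sqrt; apply: eq_bigr => i _; rewrite sqr_sqrtr // addr_ge0 ?sqr_ge0.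
Qed.

Lemma vnorm_ge0 d (v : 'cV[C]_d) : 0 <= vnorm v.
Proof. exact: sqrtr_ge0. Qed.

Lemma sqr_vnorm d (v : 'cV[C]_d) : vnorm v ^+ 2 = \sum_i cnorm (v i 0) ^+ 2.
Proof. by rewrite vnormE sqr_sqrtr // sumr_ge0 // => i _; rewrite sqr_ge0. Qed.

Lemma cnorm_le_vnorm d (v : 'cV[C]_d) i : cnorm (v i 0) <= vnorm v.
Proof.
rewrite -(ler_pXn2r (isT : (0 < 2)%N)) ?nnegrE ?cnorm_ge0 ?vnorm_ge0 //.
by rewrite sqr_vnorm (bigD1 i) //= lerDl sumr_ge0 // => j _; rewrite sqr_ge0.
Qed.

Lemma vnorm_le_sum d (v : 'cV[C]_d) : vnorm v <= \sum_i cnorm (v i 0).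
Proof.
have sum_ge0 (P : pred 'I_d) : 0 <= \sum_(i | P i) cnorm (v i 0).
  by apply: sumr_ge0 => i _; apply: cnorm_ge0.
rewrite -(ler_pXn2r (isT : (0 < 2)%N)) ?nnegrE ?vnorm_ge0 //.
rewrite sqr_vnorm expr2 mulr_suml ler_sum // => i _.
by rewrite expr2 ler_wpM2l ?cnorm_ge0 // (bigD1 i) //= lerDl.
Qed.

Lemma vnormZ d (r : R) (v : 'cV[C]_d) : 0 <= r -> vnorm (r%:C%C *: v) = r * vnorm v.
Proof.
move=> r_ge0; rewrite !vnormE -[r in RHS]ger0_norm // -sqrtr_sqr -sqrtrM ?sqr_ge0 //.
congr Num.sqrt; rewrite mulr_sumr; apply: eq_bigr => i _.
rewrite mxE cnormM exprMn; congr (_ * _).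
by rewrite /cnorm /= expr0n addr0 sqrtr_sqr ger0_norm.
Qed.

Lemma vnorm_delta d (i : 'I_d) : vnorm (delta_mx i 0 : 'cV[C]_d) = 1.
Proof.
rewrite vnormE (bigD1 i) //= big1 ?addr0 => [|j /negbTE j_neq_i].
  by rewrite mxE !eqxx /cnorm /= expr1n expr0n addr0 !sqrtr1 expr1n sqrtr1.
by rewrite mxE j_neq_i /cnorm /= expr0n addr0 sqrtr0 expr0n.
Qed.

Lemma vnorm_mulmx_le_entries d (A : 'M[C]_d) (v : 'cV[C]_d) :
  vnorm (A *m v) <= (\sum_i \sum_j cnorm (A i j)) * vnorm v.
Proof.
apply: (le_trans (vnorm_le_sum _)); rewrite mulr_suml; apply: ler_sum => i _.
rewrite mxE mulr_suml; apply: (le_trans (cnorm_sum _)); apply: ler_sum => j _.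
by rewrite cnormM ler_wpM2l ?cnorm_ge0 ?cnorm_le_vnorm.
Qed.

Lemma vnorm_mulmx_le_spectral d (A : 'M[C]_d) v :
  vnorm v = 1 -> vnorm (A *m v) <= spectral_norm A.
Proof.
move=> v_unit; apply: ub_le_sup; last by exists v.
exists (\sum_i \sum_j cnorm (A i j)) => _ [u /= u_unit <-].
by have := vnorm_mulmx_le_entries A u; rewrite u_unit mulr1.
Qed.

Lemma vnorm_mulmx_le d (A : 'M[C]_d) v : vnorm (A *m v) <= spectral_norm A * vnorm v.
Proof.
have [v0|v_neq0] := eqVneq (vnorm v) 0.
  by have := vnorm_mulmx_le_entries A v; rewrite v0 !mulr0.
have v_gt0 : 0 < vnorm v by rewrite lt_def v_neq0 vnorm_ge0.
have := @vnorm_mulmx_le_spectral _ A ((vnorm v)^-1%:C%C *: v).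
rewrite -scalemxAr !vnormZ ?invr_ge0 ?vnorm_ge0 // mulVf // mulrC => /(_ erefl).
by rewrite ler_pdivrMr.
Qed.

Lemma vnorm_prod_mulmx_le d (B : R) m (M : 'I_m -> 'M[C]_d.+1) :
  0 <= B -> (forall i v, vnorm (M i *m v) <= B * vnorm v) ->
  forall v, vnorm ((\prod_i M i) *m v) <= B ^+ m * vnorm v.
Proof.
move=> B_ge0; elim: m M => [|m IH] M M_le v; first by rewrite big_ord0 mul1mx mul1r.
rewrite big_ord_recl -mulmxA exprS -mulrA; apply: (le_trans (M_le _ _)).
by rewrite ler_wpM2l // (IH (fun i => M (lift ord0 i))).
Qed.

Lemma norm_mxtrace_le d (A : 'M[C]_d) (b : R) :
  (forall v, vnorm (A *m v) <= b * vnorm v) -> `|\tr A| <= (d%:R * b)%:C%C.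
Proof.
move=> A_le; apply: (le_trans (ler_norm_sum _ _ _)).
rewrite rmorphM rmorph_nat /= -[d in d%:R]card_ord mulr_natl -sumr_const.
apply: ler_sum => i _; rewrite -cnormE lecR.
have -> : A i i = (A *m (delta_mx i 0 : 'cV[C]_d)) i 0.
  rewrite mxE (bigD1 i) //= mxE !eqxx mulr1 big1 ?addr0 // => j /negbTE j_neq_i.
  by rewrite mxE j_neq_i mulr0.
apply: le_trans (cnorm_le_vnorm _ _) _.
by have := A_le (delta_mx i 0); rewrite vnorm_delta mulr1.
Qed.

End VectorNorm.

Section PowerMean.
Variables (R : realFieldType) (I : finType) (a : I -> R).
Hypotheses (a_ge0 : forall i, 0 <= a i) (a_sum1 : \sum_i a i = 1).

Lemma sqr_mean_le (x : I -> R) : (\sum_i a i * x i) ^+ 2 <= \sum_i a i * x i ^+ 2.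
Proof.
set mu := \sum_i a i * x i.
have var_ge0 : 0 <= \sum_i a i * (x i - mu) ^+ 2.
  by apply: sumr_ge0 => i _; rewrite mulr_ge0 ?sqr_ge0.
suff var_eq : \sum_i a i * (x i - mu) ^+ 2 = \sum_i a i * x i ^+ 2 - mu ^+ 2 by lra.
rewrite (eq_bigr (fun i => a i * x i ^+ 2 - 2 * mu * (a i * x i) + mu ^+ 2 * a i)) => [|i _].
  by rewrite big_split sumrB /= -!mulr_sumr a_sum1 -/mu; ring.
by ring.
Qed.

Lemma pow2_mean_le r (x : I -> R) :
  (\sum_i a i * x i) ^+ (2 ^ r) <= \sum_i a i * x i ^+ (2 ^ r).
Proof.
elim: r x => [|r IH] x; first by rewrite expn0.
rewrite expnS exprM; under [X in _ <= X]eq_bigr do rewrite exprM.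
apply: le_trans (IH (fun i => x i ^+ 2)).
rewrite lerXn2r ?nnegrE ?sqr_ge0 ?sqr_mean_le //.
by apply: sumr_ge0 => i _; rewrite mulr_ge0 ?sqr_ge0.
Qed.

Lemma pow2_mean_le_sum r (x : I -> R) :
  (\sum_i a i * x i) ^+ (2 ^ r.+1) <= \sum_i x i ^+ (2 ^ r.+1).
Proof.
apply: (le_trans (pow2_mean_le _ _)); apply: ler_sum => i _.
apply: ler_piMl; first by rewrite expnS exprM exprn_ge0 ?sqr_ge0.
by rewrite -a_sum1 (bigD1 i) //= lerDl sumr_ge0.
Qed.

End PowerMean.

Section SpectralTrace.
Variable R : realType.
Local Notation C := R[i].
Local Open Scope sesquilinear_scope.

Lemma is_hermitian_hermsymmx d (T : 'M[C]_d) : is_hermitian T -> T \is hermsymmx.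
Proof.
rewrite /is_hermitian /adjmx qualifE /= expr0 scale1r => T_herm.
by apply/eqP; rewrite -[LHS]T_herm; apply/matrixP => i j; rewrite !mxE.
Qed.

Section Normal.
Variables (d : nat) (T : 'M[C]_d).
Hypothesis T_normal : T \is normalmx.
Local Notation P := (spectralmx T).
Local Notation D := (spectral_diag T).

Lemma mxtrace_expr_normal m : \tr (T ^+ m.+1) = \sum_j D 0 j ^+ m.+1.
Proof.
have /orthomx_spectralP T_eq := T_normal.
have T_expr : T ^+ m.+1 = invmx P *m diag_mx (\row_j D 0 j ^+ m.+1) *m P.
  elim: m => [|m IH].
    by rewrite expr1 {1}T_eq; congr (_ *m diag_mx _ *m _); apply/rowP => j; rewrite mxE.
  rewrite exprS IH {1}T_eq -mulmxE -!mulmxA; congr (_ *m _).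
  rewrite (mulmxA P) mulmxV ?spectral_unit // mul1mx mulmxA; congr (_ *m _).
  rewrite mul_diag_mx; apply/matrixP => i j; rewrite !mxE.
  by case: eqP; rewrite ?mulr1n ?mulr0n ?mulr0 ?exprS.
rewrite T_expr mxtrace_mulC mulmxA mulmxV ?spectral_unit // mul1mx mxtrace_diag.
by apply: eq_bigr => j _; rewrite mxE.
Qed.

Lemma mxtrace_mul_normal (rho : 'M[C]_d) :
  \tr (rho *m T) = \sum_j (P *m rho *m invmx P) j j * D 0 j.
Proof.
have /orthomx_spectralP T_eq := T_normal; rewrite {1}T_eq.
rewrite !mulmxA mxtrace_mulC !mulmxA.
by rewrite /mxtrace; apply: eq_bigr => j _; rewrite mul_mx_diag mxE.
Qed.

End Normal.

Lemma psd_conj_unitary_diag_ge0 d (rho P : 'M[C]_d) j : psd rho -> P \is unitarymx ->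
  0 <= (P *m rho *m invmx P) j j.
Proof.
move=> rho_psd P_unitary; rewrite invmx_unitary //.
have := rho_psd (adjmx (row j P)); congr (0 <= _).
rewrite !mxE; apply: eq_bigr => l _; rewrite !mxE; congr (_ * _).
by apply: eq_bigr => i _; rewrite !mxE conjcK.
Qed.

Lemma sum_conj_diag d (rho P : 'M[C]_d) : P \in unitmx ->
  \sum_j (P *m rho *m invmx P) j j = \tr rho.
Proof.
by move=> P_unit; rewrite -[LHS]/(\tr _) -mulmxA mxtrace_mulC -mulmxA mulVmx // mulmx1.
Qed.

(* In an eigenbasis of [T], [Tr (rho T)] is a convex combination of the
   (real) eigenvalues of [T], with weights the diagonal of [rho]. *)
Lemma density_trace_pow2_le d (rho T : 'M[C]_d) r : density_matrix rho -> is_hermitian T ->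
  complex.Re (\tr (rho *m T)) ^+ (2 ^ r.+1) <= complex.Re (\tr (T ^+ (2 ^ r.+1))).
Proof.
move=> [_ [rho_psd tr_rho]] /is_hermitian_hermsymmx T_herm.
have T_normal := hermitian_normalmx T_herm.
have /mxOverP D_real := hermitian_spectral_diag_real T_herm.
set P := spectralmx T; set D := spectral_diag T.
pose w j := (P *m rho *m invmx P) j j.
have w_ge0 j : 0 <= w j := psd_conj_unitary_diag_ge0 j rho_psd (spectral_unitarymx T).
have wE j : w j = (complex.Re (w j))%:C%C by rewrite RRe_real ?ger0_real.
have DE j : D 0 j = (complex.Re (D 0 j))%:C%C by rewrite RRe_real ?D_real.
have Re_w_ge0 j : 0 <= complex.Re (w j) by rewrite -lecR -wE.
have sum_Re_w : \sum_j complex.Re (w j) = 1.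
  apply: complexI; rewrite rmorph_sum rmorph1 /= -tr_rho -(sum_conj_diag _ (spectral_unit T)).
  by apply: eq_bigr => j _; rewrite -wE.
have -> : complex.Re (\tr (rho *m T)) = \sum_j complex.Re (w j) * complex.Re (D 0 j).
  rewrite mxtrace_mul_normal // -/P -/D.
  have -> : \sum_j (P *m rho *m invmx P) j j * D 0 j =
      (\sum_j complex.Re (w j) * complex.Re (D 0 j))%:C%C.
    by rewrite rmorph_sum; apply: eq_bigr => j _; rewrite rmorphM /= -wE -DE.
  by [].
have -> : complex.Re (\tr (T ^+ (2 ^ r.+1))) = \sum_j complex.Re (D 0 j) ^+ (2 ^ r.+1).
  rewrite -(prednK (expn_gt0 2 r.+1)) mxtrace_expr_normal // -/D.
  have -> : \sum_j D 0 j ^+ (2 ^ r.+1).-1.+1 =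
      (\sum_j complex.Re (D 0 j) ^+ (2 ^ r.+1).-1.+1)%:C%C.
    by rewrite rmorph_sum; apply: eq_bigr => j _; rewrite rmorphXn /= -DE.
  by [].
exact: pow2_mean_le_sum.
Qed.

End SpectralTrace.

Section Shattering.
Variable R : realType.
Local Notation C := R[i].

Definition realizes_pattern d k (M : 'I_k -> 'M[C]_d) (alpha : 'I_k -> R) (gamma : R)
    (y : 'I_k -> bool) (rho : 'M[C]_d) : Prop :=
  forall j, if y j then alpha j + gamma <= complex.Re (\tr (rho *m M j))
            else complex.Re (\tr (rho *m M j)) <= alpha j - gamma.

Lemma Re_sgb_mul b (z : C) : complex.Re (sgb b * z) = sgb b * complex.Re z.
Proof. by case: b; case: z => x y /=; rewrite ?oppr0 mul0r subr0. Qed.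

Lemma is_hermitian_sign_comb d k (M : 'I_k -> 'M[C]_d.+1) e :
  (forall j, is_hermitian (M j)) -> is_hermitian (sign_comb M e).
Proof.
move=> M_herm; apply/matrixP => a b; rewrite !mxE !summxE rmorph_sum.
apply: eq_bigr => j _; rewrite !mxE rmorphM rmorph_sgb /=.
by have /matrixP/(_ a b) := M_herm j; rewrite !mxE => ->.
Qed.

Lemma Re_trace_mul_sign_comb d k (rho : 'M[C]_d.+1) (M : 'I_k -> 'M[C]_d.+1) e :
  complex.Re (\tr (rho *m sign_comb M e)) = \sum_j sgb (e j) * complex.Re (\tr (rho *m M j)).
Proof.
rewrite mulmx_sumr (raddf_sum (@mxtrace C d.+1)) raddf_sum /=; apply: eq_bigr => j _.
by rewrite -scalemxAr mxtraceZ Re_sgb_mul.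
Qed.

(* The states realizing [e] and its complement separate [Tr (rho T_e)] by
   [2 k gamma] around [\sum_j sgb (e j) * alpha j], so one of them has
   [|Tr (rho T_e)| >= k gamma]. *)
Lemma shattered_sign_comb_trace_ge d k (M : 'I_k -> 'M[C]_d.+1) alpha gamma r
    (e : {ffun 'I_k -> bool}) (rho1 rho2 : 'M[C]_d.+1) :
  0 < gamma -> (forall j, is_hermitian (M j)) ->
  density_matrix rho1 -> realizes_pattern M alpha gamma e rho1 ->
  density_matrix rho2 -> realizes_pattern M alpha gamma (fun j => ~~ e j) rho2 ->
  (k%:R * gamma) ^+ (2 ^ r.+1) <= complex.Re (\tr (sign_comb M e ^+ (2 ^ r.+1))).
Proof.
move=> gamma_gt0 M_herm rho1_dens rho1_e rho2_dens rho2_ne.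
have T_herm := is_hermitian_sign_comb e M_herm.
set a := \sum_j sgb (e j) * alpha j.
have kgamma : k%:R * gamma = \sum_(j < k) gamma by rewrite sumr_const card_ord mulr_natl.
have rho1_ge : a + k%:R * gamma <= complex.Re (\tr (rho1 *m sign_comb M e)).
  rewrite Re_trace_mul_sign_comb kgamma -big_split /=; apply: ler_sum => j _.
  by have := rho1_e j; case: (e j) => /=; lra.
have rho2_le : complex.Re (\tr (rho2 *m sign_comb M e)) <= a - k%:R * gamma.
  rewrite Re_trace_mul_sign_comb kgamma -sumrB /=; apply: ler_sum => j _.
  by have := rho2_ne j; case: (e j) => /=; lra.
have kgamma_ge0 : 0 <= k%:R * gamma by rewrite mulr_ge0 // ltW.
have [a_ge0|a_lt0] := lerP 0 a.
  apply: le_trans (density_trace_pow2_le r rho1_dens T_herm).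
  by rewrite lerXn2r ?nnegrE //; lra.
apply: le_trans (density_trace_pow2_le r rho2_dens T_herm).
set t := complex.Re _.
have -> : t ^+ (2 ^ r.+1) = (- t) ^+ (2 ^ r.+1) by rewrite expnS !exprM sqrrN.
by rewrite lerXn2r ?nnegrE //; lra.
Qed.

Lemma sum_trace_sign_comb_expr_le d k (M : 'I_k -> 'M[C]_d.+1) (B : R) m : 0 <= B ->
  (forall j v, vnorm (M j *m v) <= B * vnorm v) ->
  \sum_(e : {ffun 'I_k -> bool}) complex.Re (\tr (sign_comb M e ^+ m))
    <= d.+1%:R * B ^+ m * rademacher_moment R k m.
Proof.
move=> B_ge0 M_le.
rewrite -raddf_sum -(raddf_sum (@mxtrace C d.+1)) sum_sign_comb_expr.
rewrite (raddf_sum (@mxtrace C d.+1)) /=.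
apply: (le_trans (Re_le_cnorm _)); rewrite -lecR cnormE.
apply: (le_trans (ler_norm_sum _ _ _)).
apply: (@le_trans _ _ (\sum_f sign_coef C f * (d.+1%:R * B ^+ m)%:C%C)).
  apply: ler_sum => f _; rewrite mxtraceZ normrM ger0_norm ?sign_coef_ge0 //.
  rewrite ler_wpM2l ?sign_coef_ge0 // norm_mxtrace_le // => v.
  exact: vnorm_prod_mulmx_le.
rewrite -mulr_suml sum_sign_coef -(rmorph_rademacher_moment (real_complex R)).
by rewrite -rmorphM mulrC.
Qed.

(* Choosing the even moment [2 q] with [q] the power of two in [(n, 2 n]]
   balances the dimension factor [2 ^ n] against the Rademacher moment. *)
Lemma shattered_card_le d n k (M : 'I_k -> 'M[C]_d) alpha (gamma B : R) :
  (0 < d)%N -> (d <= 2 ^ n)%N -> (0 < n)%N -> 0 < gamma ->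
  (forall j, is_hermitian (M j)) ->
  (forall j v, vnorm (M j *m v) <= B * vnorm v) ->
  (forall y, exists2 rho, density_matrix rho & realizes_pattern M alpha gamma y rho) ->
  k%:R * gamma ^+ 2 <= 16 * n%:R * B ^+ 2.
Proof.
case: d M => // d M _ le_d_2n n_gt0 gamma_gt0 M_herm M_le shattered.
have [->|k_gt0] := posnP k.
  by rewrite mul0r; exact: mulr_ge0 (mulr_ge0 (ler0n _ 16) (ler0n _ n)) (sqr_ge0 B).
have B_ge0 : 0 <= B.
  have := M_le (Ordinal k_gt0) (delta_mx 0 0); rewrite vnorm_delta mulr1.
  exact: le_trans (vnorm_ge0 _).
have /andP[_ lt_n_q] := trunc_log_bounds (isT : (1 < 2)%N) n_gt0.
set q := (2 ^ (trunc_log 2 n).+1)%N in lt_n_q.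
have q_gt0 : (0 < q)%N by rewrite expn_gt0.
have le_q_2n : (q <= 2 * n)%N by rewrite /q expnS leq_mul2l trunc_logP.
have le_d_2q : (d.+1 <= 2 ^ q)%N by rewrite (leq_trans le_d_2n) // leq_pexp2l // ltnW.
have trace_ge e : (k%:R * gamma) ^+ (2 * q) <= complex.Re (\tr (sign_comb M e ^+ (2 * q))).
  have [rho1 rho1_dens rho1_e] := shattered e.
  have [rho2 rho2_dens rho2_ne] := shattered (fun j => ~~ e j).
  rewrite -expnS; exact: shattered_sign_comb_trace_ge rho1_dens rho1_e rho2_dens rho2_ne.
apply: le_trans (fat_bound_from_moments k_gt0 q_gt0 le_d_2q _) _.
  have dB_ge0 : 0 <= d.+1%:R * B ^+ (2 * q) := mulr_ge0 (ler0n _ _) (exprn_ge0 _ B_ge0).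
  apply: le_trans _ (ler_wpM2l dB_ge0 (rademacher_moment_le R k q)).
  apply: le_trans _ (sum_trace_sign_comb_expr_le (2 * q) B_ge0 M_le).
  have card_signs : #|{ffun 'I_k -> bool}| = (2 ^ k)%N by rewrite card_ffun card_bool card_ord.
  rewrite -natrX -card_signs mulr_natl -sumr_const.
  by apply: ler_sum => e _; apply: trace_ge.
apply: ler_wpM2r; first exact: sqr_ge0.
by rewrite -!natrM ler_nat; lia.
Qed.

Lemma not_shattered_dim1 k (M : 'I_k -> 'M[C]_1) alpha (gamma : R) : 0 < gamma ->
  (forall y, exists2 rho, density_matrix rho & realizes_pattern M alpha gamma y rho) ->
  k = 0%N.
Proof.
move=> gamma_gt0 shattered; apply/eqP; rewrite -leqn0 leqNgt; apply/negP => k_gt0.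
have trace_dim1 (rho A : 'M[C]_1) : density_matrix rho -> \tr (rho *m A) = A 0 0.
  by case=> _ [_]; rewrite /mxtrace !big_ord1 mxE big_ord1 => ->; rewrite mul1r.
have [rho1 /trace_dim1 tr1 /(_ (Ordinal k_gt0))] := shattered (fun _ => true).
have [rho0 /trace_dim1 tr0 /(_ (Ordinal k_gt0))] := shattered (fun _ => false).
by rewrite /= tr1 tr0; lra.
Qed.

Lemma fat_shatters_trace_class_states X Theta n (rho : Theta -> 'M[C]_(2 ^ n))
    (O : X -> 'M[C]_(2 ^ n)) gamma k :
  (forall th, density_matrix (rho th)) -> fat_shatters (trace_class rho O) gamma k ->
  exists (pts : 'I_k -> X) (alpha : 'I_k -> R), forall y, exists2 r,
    density_matrix r & realizes_pattern (fun j => O (pts j)) alpha gamma y r.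
Proof.
move=> rho_dens [pts [alpha shattered]]; exists pts, alpha => y.
by have [_ [th _ <-] f_y] := shattered y; exists (rho th).
Qed.

End Shattering.

Theorem mainTheorem2 :
  exists Cst : rat, 0 < Cst /\
  forall (R : realType) (X Theta : Type) (n : nat)
    (rho : Theta -> 'M[R[i]]_(2 ^ n)) (O : X -> 'M[R[i]]_(2 ^ n)),
    (forall th, density_matrix (rho th)) ->
    (forall x, is_hermitian (O x)) ->
    has_ubound (spectral_norms O) ->
    forall gamma : R, 0 < gamma ->
    forall k : nat, fat_shatters (trace_class rho O) gamma k ->
      (k%:R : R) <= ratr Cst * n%:R * sup_spectral_norm O ^+ 2 / gamma ^+ 2.
Proof.
exists 16; split => // R X Theta n rho O rho_dens O_herm O_bdd gamma gamma_gt0 k.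
move=> /(fat_shatters_trace_class_states rho_dens) [pts [alpha shattered]].
rewrite ler_pdivlMr ?exprn_gt0 // rmorph_nat.
have [n0|n_gt0] := posnP n.
  subst n; rewrite (not_shattered_dim1 gamma_gt0 shattered) mul0r.
  exact: mulr_ge0 (mulr_ge0 (ler0n _ 16) (ler0n _ 0)) (sqr_ge0 _).
apply: shattered_card_le (expn_gt0 2 n) (leqnn _) n_gt0 gamma_gt0 _ _ shattered.
  by move=> j; apply: O_herm.
move=> j v; apply: le_trans (vnorm_mulmx_le _ _) _.
by rewrite ler_wpM2r ?vnorm_ge0 //; apply: (ub_le_sup O_bdd); exists (pts j).
Qed.
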